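(* Let $D$ be a division algebra and let $S$ be a ring extension of $D$ which is automorphically normalizable over $D$. If $S$ is a division algebra, then $S$ is finitely generated as a left $D$-module.
   Context: All rings are associative with unity. For a ring $S\supseteq D$, $a\in S$ is automorphic over $D$ with respect to $\tau\in\mathrm{Aut}(D)$ if $ab=\tau(b)a$ for all $b\in D$. Commuting $a_1,\ldots,a_m\in S$ are (left) algebraically independent over $D$ if the monomials $a_1^{i_1}\cdots a_m^{i_m}$ are left linearly independent over $D$. $S$ is automorphically normalizable over $D$ if there exist $m\ge0$ and commuting $a_1,\ldots,a_m\in S$, automorphic over $D$ with respect to pairwise commuting automorphisms $\tau_1,\ldots,\tau_m$ of $D$, left algebraically independent over $D$, such that $S$ is finitely generated as a left module over the subring $D[a_1,\ldots,a_m]$ generated by $D\cup\{a_1,\ldots,a_m\}$. *)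

From HB Require Import structures.
From mathcomp Require Import all_boot all_order all_algebra.
Set Implicit Arguments. Unset Strict Implicit. Unset Printing Implicit Defensive.
Import GRing.Theory.
Local Open Scope ring_scope.

(* A division ring: every nonzero element is invertible
   (unitRingType already guarantees 1 != 0). *)
Definition is_division_ring (R : unitRingType) : Prop :=
  forall x : R, x != 0 -> x \is a GRing.unit.

Definition is_ring_aut (D : unitRingType) (tau : D -> D) : Prop :=
  [/\ forall x y, tau (x + y) = tau x + tau y,
      forall x y, tau (x * y) = tau x * tau y,
      tau 1 = 1 & bijective tau].

Definition automorphic (D S : unitRingType) (f : D -> S) (tau : D -> D) (a : S)
  : Prop := forall b : D, a * f b = f (tau b) * a.

Definition monomial (S : unitRingType) (m : nat) (a : 'I_m -> S)
  (e : 'I_m -> nat) : S := \prod_(i < m) a i ^+ e i.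

(* Left algebraic independence over D: the monomials are left linearly
   independent over D (every finite family of exponent vectors lies in some
   box {0..N-1}^m, so quantifying over all boxes covers all finite families). *)
Definition left_alg_indep (D S : unitRingType) (f : D -> S) (m : nat)
  (a : 'I_m -> S) : Prop :=
  forall (N : nat) (c : {ffun 'I_m -> 'I_N} -> D),
    \sum_(e : {ffun 'I_m -> 'I_N}) f (c e) * monomial a (fun i => nat_of_ord (e i)) = 0 ->
    forall e, c e = 0.

Definition subring_pred (S : unitRingType) (P : S -> Prop) : Prop :=
  [/\ P 1, forall x y, P x -> P y -> P (x - y) & forall x y, P x -> P y -> P (x * y)].

Definition gen_subring (D S : unitRingType) (f : D -> S) (m : nat)
  (a : 'I_m -> S) (x : S) : Prop :=
  forall P : S -> Prop, subring_pred P ->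
    (forall d, P (f d)) -> (forall i, P (a i)) -> P x.

Definition fg_left_module_over (S : unitRingType) (T : S -> Prop) : Prop :=
  exists (n : nat) (s : 'I_n -> S), forall x : S,
    exists t : 'I_n -> S, (forall i, T (t i)) /\ x = \sum_(i < n) t i * s i.

Definition fg_left_D_module (D S : unitRingType) (f : D -> S) : Prop :=
  exists (n : nat) (s : 'I_n -> S), forall x : S,
    exists c : 'I_n -> D, x = \sum_(i < n) f (c i) * s i.

Definition automorphically_normalizable (D S : unitRingType) (f : D -> S) : Prop :=
  exists (m : nat) (a : 'I_m -> S) (tau : 'I_m -> D -> D),
    (forall i j, a i * a j = a j * a i) /\
    (forall i, is_ring_aut (tau i)) /\
    (forall i j x, tau i (tau j x) = tau j (tau i x)) /\
    (forall i, automorphic f (tau i) (a i)) /\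
    left_alg_indep f a /\
    fg_left_module_over (gen_subring f a).

(* Let R = D[a_1, ..., a_m]; when m = 0, R is the image of D and there is
   nothing to prove, so assume m > 0.  Counting the monomials of a box against
   the linear conditions they must satisfy shows that R has the strong rank
   condition (n + 1 vectors of R^n are left dependent); hence R is a left Ore
   domain, and, applying the same argument in the opposite rings, a right Ore
   domain.  Since S has finite rank over R, a maximal R-independent family
   starting with 1 yields a left R-linear "coordinate along 1" from S to the
   left fractions of R, fixing those fractions.  As S is finitely generated
   over R, the coordinates of the generators share one right denominator
   W != 0, so that u^-1 W lies in R for every nonzero u in R.  With u = a_1^k
   this makes W divisible by every power of a_1 in R, which the independence
   of the monomials forbids. *)

From HB Require Import structures.
From mathcomp Require Import all_boot all_order all_algebra.
From mathcomp Require Import zify.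
From Stdlib Require Import Classical.
Set Implicit Arguments. Unset Strict Implicit. Unset Printing Implicit Defensive.
Import GRing.Theory.

Section BoxCount.
Local Open Scope nat_scope.

Lemma expSn_subn_le (m t : nat) : m <= t -> t.+1 ^ m * (t - m) <= t ^ m * t.
Proof.
elim: m => [|m IH] mt; first by rewrite !expn0 !mul1n subn0.
move/(_ (ltnW mt)): IH => IH; rewrite !expnS.
have step : t.+1 * (t - m.+1) <= t * (t - m) by nia.
have := leq_mul (leqnn (t.+1 ^ m)) step.
have := leq_mul (leqnn t) IH.
nia.
Qed.

(* With [N := d * ((n + 1) m + 1)], the (n + 1) N^m unknowns of the linear
   system in [gen_subring_strong_rank] outnumber its n (N + d)^m equations. *)
Lemma box_count_lt (n m d : nat) : 0 < d ->
  n * (d * (n.+1 * m).+1 + d) ^ m < n.+1 * (d * (n.+1 * m).+1) ^ m.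
Proof.
move=> d_gt0; set t := (n.+1 * m).+1.
rewrite -mulnSr !expnMn.
have dm_gt0 : 0 < d ^ m by rewrite expn_gt0 d_gt0.
suff : n * t.+1 ^ m < n.+1 * t ^ m.
  by set X := t.+1 ^ m; set Y := t ^ m; set Z := d ^ m; nia.
have m_le_t : m <= t by rewrite /t; nia.
have := leq_mul (leqnn n) (expSn_subn_le m_le_t).
have -> : t - m = (n * m).+1 by rewrite /t; lia.
have tm_gt0 : 0 < t ^ m by rewrite expn_gt0.
set X := t.+1 ^ m; set Y := t ^ m; rewrite /t in tm_gt0 *; nia.
Qed.

End BoxCount.

Local Open Scope ring_scope.

Section DivisionRing.
Variable K : unitRingType.
Hypothesis Kdiv : is_division_ring K.

Lemma divring_mulf_eq0 (x y : K) : (x * y == 0) = (x == 0) || (y == 0).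
Proof.
have [->|x0] := eqVneq x 0; first by rewrite mul0r eqxx.
exact: mulrI_eq0 (mulrI (Kdiv x0)).
Qed.

Lemma divring_mulf_neq0 (x y : K) : x != 0 -> y != 0 -> x * y != 0.
Proof. by move=> x0 y0; rewrite divring_mulf_eq0 negb_or x0. Qed.

(* Eliminate the first equation through a variable on which it does not vanish. *)
Lemma homogeneous_system_nontrivial (I A : eqType) (phi : I -> A -> K)
    (eqs : seq I) (vars : seq A) :
  uniq vars -> (size eqs < size vars)%N ->
  exists y : A -> K, (exists2 v, v \in vars & y v != 0) /\
    {in eqs, forall i, \sum_(v <- vars) y v * phi i v = 0}.
Proof.
elim: eqs phi vars => [|i eqs IH] phi vars uvars /= size_lt.
  exists (fun _ => 1); split => //.
  by case: vars size_lt {uvars} => // v vars _; exists v; rewrite ?mem_head ?oner_neq0.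
have [phi_i0|] := boolP (all (fun v => phi i v == 0) vars).
  have [y [y_nz Hy]] := IH phi vars uvars (ltnW size_lt).
  exists y; split => // j; rewrite inE => /predU1P [->|/Hy //].
  by rewrite big1_seq // => v /andP [_ /(allP phi_i0) /eqP ->]; rewrite mulr0.
case/allPn => v0 v0_in phi_v0.
pose c := (phi i v0)^-1.
have c_phi : c * phi i v0 = 1 by apply: mulVr; apply: Kdiv.
pose vars' := [seq v <- vars | v != v0].
have size_vars : size vars = (size vars').+1.
  have := count_predC (pred1 v0) vars.
  by rewrite count_uniq_mem // v0_in size_filter => <-; rewrite add1n.
pose phi' j v := phi j v - phi i v * c * phi j v0.
have size_lt' : (size eqs < size vars')%N by move: size_lt; rewrite size_vars.
have [y' [[v y'_in y'v] Hy']] := IH phi' vars' (filter_uniq _ uvars) size_lt'.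
pose sum' F := \sum_(w <- vars') y' w * F w.
pose y w := if w == v0 then - sum' (phi i) * c else y' w.
have sum_y F : \sum_(w <- vars) y w * F w = y v0 * F v0 + sum' F.
  rewrite (bigD1_seq v0) //= /sum' big_filter; congr (_ + _).
  by apply: eq_bigr => w /negbTE wv0; rewrite /y wv0.
exists y; split.
  move: y'_in; rewrite mem_filter => /andP [vv0 v_in].
  by exists v; rewrite // /y (negbTE vv0).
move=> j; rewrite inE => /predU1P [->|j_in].
  by rewrite sum_y /y eqxx -mulrA c_phi mulr1 addNr.
have := Hy' j j_in; rewrite /phi' /=.
under eq_bigr do rewrite mulrBr !mulrA -(mulrA _ c).
rewrite sumrB -mulr_suml => /eqP; rewrite subr_eq0 => /eqP E.
by rewrite sum_y /y eqxx /sum' E !mulNr mulrA addNr.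
Qed.

End DivisionRing.

Section SubringPred.
Variables (S : unitRingType) (R : S -> Prop).
Hypothesis Rsub : subring_pred R.

Lemma subring_pred1 : R 1. Proof. by case: Rsub. Qed.

Lemma subring_predB x y : R x -> R y -> R (x - y).
Proof. by case: Rsub => _ RB _; apply: RB. Qed.

Lemma subring_predM x y : R x -> R y -> R (x * y).
Proof. by case: Rsub => _ _ RM; apply: RM. Qed.

Lemma subring_pred0 : R 0.
Proof. by rewrite -(subrr 1); apply: subring_predB; apply: subring_pred1. Qed.

Lemma subring_predN x : R x -> R (- x).
Proof. by rewrite -sub0r; apply: subring_predB; apply: subring_pred0. Qed.

Lemma subring_predD x y : R x -> R y -> R (x + y).
Proof. by move=> Rx Ry; rewrite -[y]opprK; apply: subring_predB (subring_predN _). Qed.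

Lemma subring_pred_sum (I : Type) (r : seq I) (P : pred I) (F : I -> S) :
  (forall i, P i -> R (F i)) -> R (\sum_(i <- r | P i) F i).
Proof. by move=> RF; apply: (big_ind R subring_pred0 subring_predD). Qed.

Lemma subring_pred_prod (I : Type) (r : seq I) (P : pred I) (F : I -> S) :
  (forall i, P i -> R (F i)) -> R (\prod_(i <- r | P i) F i).
Proof. by move=> RF; apply: (big_ind R subring_pred1 subring_predM). Qed.

Lemma subring_predX x k : R x -> R (x ^+ k).
Proof. by move=> Rx; rewrite -(card_ord k) -prodr_const; apply: subring_pred_prod. Qed.

End SubringPred.

Definition left_ore (S : unitRingType) (R : S -> Prop) : Prop :=
  forall u v, R u -> R v -> u != 0 -> v != 0 ->
  exists p q, [/\ R p, R q, p != 0 & p * u = q * v].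

Definition right_ore (S : unitRingType) (R : S -> Prop) : Prop :=
  forall u v, R u -> R v -> u != 0 -> v != 0 ->
  exists p q, [/\ R p, R q, p != 0 & u * p = v * q].

Definition strong_rank_condition (S : unitRingType) (R : S -> Prop) : Prop :=
  forall k (t : 'I_k.+1 -> 'I_k -> S), (forall j i, R (t j i)) ->
  exists2 r : 'I_k.+1 -> S, forall j, R (r j) &
    (exists j, r j != 0) /\ forall i, \sum_j r j * t j i = 0.

Lemma strong_rank_left_ore (S : unitRingType) (R : S -> Prop) :
  is_division_ring S -> subring_pred R -> strong_rank_condition R -> left_ore R.
Proof.
move=> Sdiv Rsub Rrank u v Ru Rv u0 v0.
pose t (j : 'I_2) (i : 'I_1) := if j == ord0 then u else v.
have [|r Rr [[j rj] /(_ ord0)]] := @Rrank 1%N t; first by move=> j i; rewrite /t; case: ifP.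
have widen0 : widen_ord (leqnSn 1) ord0 = ord0 by apply: val_inj.
rewrite big_ord_recr big_ord1 widen0 /t /=.
move=> /eqP; rewrite addr_eq0 => /eqP E.
have r_eq0 : (r ord0 == 0) = (r ord_max == 0).
  rewrite -[r ord0 == 0]orbF -(negbTE u0) -divring_mulf_eq0 // E oppr_eq0.
  by rewrite divring_mulf_eq0 // (negbTE v0) orbF.
have r0_neq0 : r ord0 != 0.
  apply: contraNneq rj => /eqP r0; move: (r0); rewrite r_eq0.
  by have [->|->] : j = ord0 \/ j = ord_max by case: j => -[|[|//]] ?; [left|right]; apply: val_inj.
exists (r ord0), (- r ord_max); rewrite mulNr.
by split=> //; exact: (subring_predN Rsub (Rr _)).
Qed.

Section LeftFractions.
Variables (S : unitRingType) (R : S -> Prop) (n : nat) (s : 'I_n -> S).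
Hypothesis Sdiv : is_division_ring S.
Hypothesis Rsub : subring_pred R.
Hypothesis Rrank : strong_rank_condition R.
Hypothesis Rright : right_ore R.
Hypothesis Rgen : forall x, exists t : 'I_n -> S,
  (forall i, R (t i)) /\ x = \sum_(i < n) t i * s i.

Let Rleft : left_ore R := strong_rank_left_ore Sdiv Rsub Rrank.

Definition left_indep k (y : nat -> S) : Prop :=
  forall r : nat -> S, (forall l, R (r l)) ->
  \sum_(l < k) r l * y l = 0 -> forall l, (l < k)%N -> r l = 0.

Definition frac_spanned k (y : nat -> S) (x : S) : Prop :=
  exists r (p : nat -> S), [/\ R r, r != 0, forall l, R (p l) &
    r * x = \sum_(l < k) p l * y l].

Definition left_frac (x : S) : Prop := exists2 r, R r /\ r != 0 & R (r * x).

Lemma left_indep_leq k y : left_indep k y -> (k <= n)%N.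
Proof.
move=> yindep; rewrite leqNgt; apply/negP => n_lt_k.
have [t Ht] := fin_all_exists (fun j : 'I_n.+1 => Rgen (y j)).
have [|r Rr [[j rj] rt]] := @Rrank _ t; first by move=> j i; case: (Ht j).
pose r' l := if (l < n.+1)%N then r (inord l) else 0.
have Rr' l : R (r' l) by rewrite /r'; case: ifP => _; [exact: Rr | exact: (subring_pred0 Rsub)].
have r'_sum : \sum_(l < k) r' l * y l = \sum_(j < n.+1) r j * y j.
  rewrite (bigID (fun l : 'I_k => (l < n.+1)%N)) /= [X in _ + X]big1 ?addr0; last first.
    by move=> l /negbTE; rewrite /r' => ->; rewrite mul0r.
  rewrite -(big_ord_widen k (fun l => r' l * y l) n_lt_k).
  by apply: eq_bigr => l _; rewrite /r' ltn_ord inord_val.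
have : \sum_(l < k) r' l * y l = 0.
  rewrite r'_sum; under eq_bigr do rewrite (proj2 (Ht _)) mulr_sumr.
  rewrite exchange_big big1 // => i _.
  by under eq_bigr do rewrite mulrA; rewrite -mulr_suml rt mul0r.
move/(yindep r' Rr')/(_ j (leq_trans (ltn_ord j) n_lt_k)).
by rewrite /r' ltn_ord inord_val; apply/eqP.
Qed.

Lemma left_indep_extend k y x : left_indep k y -> ~ frac_spanned k y x ->
  left_indep k.+1 (fun l => if l == k then x else y l).
Proof.
move=> yindep x_free r Rr; rewrite big_ord_recr /= eqxx.
under eq_bigr do rewrite (ltn_eqF (ltn_ord _)).
move=> r_sum; have rk : r k = 0.
  have [//|rk] := eqVneq (r k) 0; case: x_free.
  exists (r k), (fun l => - r l); split => //.
    by move=> l; apply: (subring_predN Rsub).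
  under eq_bigr do rewrite mulNr.
  by rewrite sumrN; apply/eqP; rewrite -addr_eq0 addrC r_sum.
move: r_sum; rewrite rk mul0r addr0 => /(yindep r Rr) r_eq0 l.
by rewrite ltnS leq_eqVlt => /predU1P [->|/r_eq0].
Qed.

Lemma exists_frac_basis : exists k (y : nat -> S),
  [/\ y 0%N = 1, (0 < k)%N, left_indep k y & forall x, frac_spanned k y x].
Proof.
apply: NNPP => no_basis.
have indep_fam j : exists y, y 0%N = 1 /\ left_indep j.+1 y.
  elim: j => [|j [y [y0 yindep]]].
    exists (fun _ => 1); split => // r Rr; rewrite big_ord1 mulr1 => r0 l.
    by rewrite ltnS leqn0 => /eqP ->.
  have [x x_free] : exists x, ~ frac_spanned j.+1 y x.
    by apply: NNPP => all_spanned; apply: no_basis; exists j.+1, y; split => // x;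
      apply: NNPP => x_free; apply: all_spanned; exists x.
  by exists (fun l => if l == j.+1 then x else y l); split; last exact: left_indep_extend.
have [y [_ /left_indep_leq]] := indep_fam n.
by rewrite ltnn.
Qed.

Section Coordinates.
Variables (k : nat) (y : nat -> S).
Hypothesis y0 : y 0%N = 1.
Hypothesis k_gt0 : (0 < k)%N.
Hypothesis yindep : left_indep k y.
Hypothesis yspan : forall x, frac_spanned k y x.

(* [g] is the coefficient of [x] along [y 0 = 1] in the basis [y] over the
   left fractions of [R]. *)
Definition coord (x g : S) : Prop :=
  exists r (p : nat -> S), [/\ R r, r != 0, forall l, R (p l),
    r * x = \sum_(l < k) p l * y l & r * g = p 0%N].

Lemma coord_uniq x g g' : coord x g -> coord x g' -> g = g'.
Proof.
move=> [r [p [Rr r0 Rp Ex Eg]]] [r' [p' [Rr' r'0 Rp' Ex' Eg']]].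
have [u [u' [Ru Ru' u0 E]]] := Rleft Rr Rr' r0 r'0.
have p_eq : forall l, (l < k)%N -> u * p l - u' * p' l = 0.
  apply: yindep => [l|]; first by apply: (subring_predB Rsub); apply: (subring_predM Rsub).
  under eq_bigr do rewrite mulrBl -!mulrA.
  by rewrite sumrB -!mulr_sumr -Ex -Ex' !mulrA E subrr.
apply: (mulrI (Sdiv (divring_mulf_neq0 Sdiv u0 r0))).
rewrite -mulrA Eg E -mulrA Eg'; apply/eqP.
by rewrite -subr_eq0 p_eq.
Qed.

Lemma coord0 : coord 0 0.
Proof.
exists 1, (fun _ => 0); split; rewrite ?mulr0 ?big1 //.
- exact: (subring_pred1 Rsub).
- exact: oner_neq0.
- by move=> l; apply: (subring_pred0 Rsub).
- by move=> l _; rewrite mul0r.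
Qed.

Lemma coordD x x' g g' : coord x g -> coord x' g' -> coord (x + x') (g + g').
Proof.
move=> [r [p [Rr r0 Rp Ex Eg]]] [r' [p' [Rr' r'0 Rp' Ex' Eg']]].
have [u [u' [Ru Ru' u0 E]]] := Rleft Rr Rr' r0 r'0.
exists (u * r), (fun l => u * p l + u' * p' l); split.
- exact: (subring_predM Rsub).
- exact: divring_mulf_neq0.
- by move=> l; apply: (subring_predD Rsub); apply: (subring_predM Rsub).
- rewrite mulrDr {2}E -!mulrA Ex Ex' !mulr_sumr -big_split /=.
  by apply: eq_bigr => l _; rewrite mulrDl !mulrA.
- by rewrite mulrDr {2}E -!mulrA Eg Eg'.
Qed.

Lemma coordMl t x g : R t -> coord x g -> coord (t * x) (t * g).
Proof.
move=> Rt [r [p [Rr r0 Rp Ex Eg]]].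
have [->|t0] := eqVneq t 0; first by rewrite !mul0r; apply: coord0.
have [u [u' [Ru Ru' u0 E]]] := Rleft Rt Rr t0 r0.
exists u, (fun l => u' * p l); split => //.
- by move=> l; apply: (subring_predM Rsub).
- by rewrite mulrA E -mulrA Ex mulr_sumr; apply: eq_bigr => l _; rewrite mulrA.
- by rewrite mulrA E -mulrA Eg.
Qed.

Lemma coord_sum (I : Type) (r : seq I) (t x g : I -> S) :
  (forall i, R (t i)) -> (forall i, coord (x i) (g i)) ->
  coord (\sum_(i <- r) t i * x i) (\sum_(i <- r) t i * g i).
Proof.
move=> Rt xg; apply: (big_ind2 coord coord0 (fun _ _ _ _ => @coordD _ _ _ _)) => i _.
exact: coordMl.
Qed.

Lemma coord_exists x : exists g, coord x g.
Proof.
have [r [p [Rr r0 Rp Ex]]] := yspan x.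
exists (r^-1 * p 0%N), r, p; split => //.
by rewrite mulVKr //; apply: Sdiv.
Qed.

Lemma coord_left_frac x : left_frac x -> coord x x.
Proof.
move=> [r [Rr r0] Rrx]; exists r, (fun l => if l == 0%N then r * x else 0); split => //.
  by move=> l; case: ifP => _; [exact: Rrx | exact: (subring_pred0 Rsub)].
case: k k_gt0 => // k' _; rewrite big_ord_recl /= y0 mulr1 big1 ?addr0 // => l _.
by rewrite mul0r.
Qed.

Lemma left_frac_coord x g : coord x g -> left_frac g.
Proof. by move=> [r [p [Rr r0 Rp _ Eg]]]; exists r; rewrite ?Eg. Qed.

End Coordinates.

Lemma left_frac_right_denom x : left_frac x -> exists2 w, R w /\ w != 0 & R (x * w).
Proof.
move=> [r [Rr r0] Rrx].
have [/eqP|rx0] := eqVneq (r * x) 0.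
  rewrite divring_mulf_eq0 // (negbTE r0) => /eqP ->.
  exists 1; first by split; [exact: (subring_pred1 Rsub) | exact: oner_neq0].
  by rewrite mul0r; apply: (subring_pred0 Rsub).
have [w [h [Rw Rh w0 E]]] := Rright Rrx Rr rx0 r0.
by exists w => //; rewrite (mulrI (Sdiv r0) (_ : r * (x * w) = r * h)) ?mulrA.
Qed.

Lemma common_right_denom (xs : seq S) : {in xs, forall x, left_frac x} ->
  exists2 W, R W /\ W != 0 & {in xs, forall x, R (x * W)}.
Proof.
elim: xs => [|x xs IH] xs_frac.
  by exists 1 => //; split; [exact: (subring_pred1 Rsub) | exact: oner_neq0].
have [W [RW W0] HW] : exists2 W, R W /\ W != 0 & {in xs, forall x, R (x * W)}.
  by apply: IH => z z_in; apply: xs_frac; rewrite inE z_in orbT.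
have [w [Rw w0] Rxw] := left_frac_right_denom (xs_frac x (mem_head x xs)).
have [al [be [Ral Rbe al0 E]]] := Rright RW Rw W0 w0.
exists (W * al); first by split; [apply: (subring_predM Rsub) | exact: divring_mulf_neq0].
move=> z; rewrite inE => /predU1P [->|z_in].
  by rewrite E mulrA; apply: (subring_predM Rsub).
by rewrite mulrA; apply: (subring_predM Rsub) => //; apply: HW.
Qed.

Theorem exists_common_denominator :
  exists2 W, R W /\ W != 0 & forall u, R u -> u != 0 -> R (u^-1 * W).
Proof.
have [k [y [y0 k_gt0 yindep yspan]]] := exists_frac_basis.
have [g Hg] := fin_all_exists (fun i => coord_exists yspan (s i)).
have [|W [RW W0] HW] := @common_right_denom [seq g i | i <- enum 'I_n].
  by move=> _ /mapP [i _ ->]; exact: left_frac_coord (Hg i).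
exists W => // u Ru u0.
have u_frac : left_frac u^-1.
  by exists u => //; rewrite mulrV; [exact: (subring_pred1 Rsub) | exact: Sdiv].
have [t [Rt Eu]] := Rgen u^-1.
have := coord_sum (index_enum 'I_n) Rt Hg.
rewrite -Eu => /(coord_uniq k_gt0 yindep (coord_left_frac y0 k_gt0 u_frac)) ->.
rewrite mulr_suml; apply: (subring_pred_sum Rsub) => i _; rewrite -mulrA.
by apply: (subring_predM Rsub) => //; apply: HW; apply: map_f; rewrite mem_enum.
Qed.

End LeftFractions.

Section GenSubring.
Variables (D S : unitRingType) (f : {rmorphism D -> S}) (m : nat) (a : 'I_m -> S).

Lemma gen_subring_pred : subring_pred (gen_subring f a).
Proof.
split=> [P [] | x y Rx Ry P HP Pf Pa | x y Rx Ry P HP Pf Pa] //.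
- by case: (HP) => _ PB _; apply: PB; [apply: Rx | apply: Ry].
- by case: (HP) => _ _ PM; apply: PM; [apply: Rx | apply: Ry].
Qed.

Lemma gen_subring_f d : gen_subring f a (f d).
Proof. by move=> P _ Pf _. Qed.

Lemma gen_subring_gen i : gen_subring f a (a i).
Proof. by move=> P _ _ Pa. Qed.

End GenSubring.

Section SkewMonomials.
Variables (D S : unitRingType) (f : {rmorphism D -> S}) (m : nat) (a : 'I_m -> S).
Variable tau : 'I_m -> D -> D.
Hypothesis acomm : forall i j, a i * a j = a j * a i.
Hypothesis aut : forall i, automorphic f (tau i) (a i).

Local Notation R := (gen_subring f a).
Local Notation exps := {ffun 'I_m -> nat}.
Let Rsub : subring_pred R := gen_subring_pred f a.

Definition twist (E : 'I_m -> nat) (d : D) : D :=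
  foldr (fun i x => iter (E i) (tau i) x) d (index_enum 'I_m).

Lemma monomial_automorphic E d : monomial a E * f d = f (twist E d) * monomial a E.
Proof.
have expr_aut i k x : a i ^+ k * f x = f (iter k (tau i) x) * a i ^+ k.
  elim: k x => [|k IHk] x; first by rewrite !expr0 mul1r mulr1.
  by rewrite exprS -mulrA IHk mulrA aut /= -mulrA -exprS.
rewrite /monomial /twist; elim: (index_enum 'I_m) => [|i r IH].
  by rewrite !big_nil mul1r mulr1.
by rewrite !big_cons /= -mulrA IH mulrA expr_aut -mulrA.
Qed.

Lemma commr_expr i j k l : GRing.comm (a i ^+ k) (a j ^+ l).
Proof. by apply/commrX/commr_sym/commrX. Qed.

Lemma monomialM E E' :
  monomial a E * monomial a E' = monomial a (fun i => (E i + E' i)%N).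
Proof.
rewrite /monomial; elim: (index_enum 'I_m) => [|i r IH]; first by rewrite !big_nil mul1r.
rewrite !big_cons exprD -IH -!mulrA; congr (_ * _); rewrite !mulrA; congr (_ * _).
by apply: commr_sym; apply: commr_prod => j _; apply: commr_expr.
Qed.

Definition edelta i k : exps := [ffun j => if j == i then k else 0%N].

Lemma monomial_edelta i k : monomial a (edelta i k) = a i ^+ k.
Proof.
rewrite /monomial (eq_bigr (fun j => if j == i then a i ^+ k else 1)).
  by rewrite -big_mkcond big_pred1_eq.
by move=> j _; rewrite ffunE; case: eqP => [->|_].
Qed.

(* A list of pairs [(d, E)] encodes the element sum of the [f d * a ^ E]. *)
Definition tsum (L : seq (D * exps)) : S := \sum_(p <- L) f p.1 * monomial a p.2.

Definition tcoef (L : seq (D * exps)) (E : exps) : D := \sum_(p <- L | p.2 == E) p.1.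

Definition topp (L : seq (D * exps)) := [seq (- p.1, p.2) | p <- L].

Definition tmul (L1 L2 : seq (D * exps)) :=
  [seq (p.1 * twist p.2 q.1, [ffun i => p.2 i + q.2 i])
  | p : D * exps <- L1, q : D * exps <- L2].

Lemma tsum1 d E : tsum [:: (d, E)] = f d * monomial a E.
Proof. by rewrite /tsum big_seq1. Qed.

Lemma tsum_cat L1 L2 : tsum (L1 ++ L2) = tsum L1 + tsum L2.
Proof. exact: big_cat. Qed.

Lemma tsum_opp L : tsum (topp L) = - tsum L.
Proof. by rewrite /tsum big_map -sumrN; apply: eq_bigr => p _; rewrite rmorphN mulNr. Qed.

Lemma tsum_mul L1 L2 : tsum L1 * tsum L2 = tsum (tmul L1 L2).
Proof.
rewrite /tsum /tmul big_allpairs_dep mulr_suml; apply: eq_bigr => p _.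
rewrite mulr_sumr; apply: eq_bigr => q _ /=.
rewrite rmorphM -mulrA (mulrA (monomial a _)) monomial_automorphic -!mulrA monomialM.
by rewrite /monomial; do 2 congr (_ * _); apply: eq_bigr => i _; rewrite ffunE.
Qed.

Lemma gen_subringP x : R x <-> exists L, x = tsum L.
Proof.
split=> [Rx | [L ->]]; last first.
  apply: (subring_pred_sum Rsub) => p _; apply: (subring_predM Rsub).
    exact: gen_subring_f.
  by apply: (subring_pred_prod Rsub) => i _; apply: (subring_predX Rsub); apply: gen_subring_gen.
have mono0 : monomial a [ffun=> 0%N] = 1.
  by rewrite /monomial big1 // => i _; rewrite ffunE expr0.
apply: (Rx (fun x => exists L, x = tsum L)).
- split=> [|_ _ [L1 ->] [L2 ->]|_ _ [L1 ->] [L2 ->]].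
  + by exists [:: (1, [ffun=> 0%N])]; rewrite tsum1 rmorph1 mono0 mulr1.
  + by exists (L1 ++ topp L2); rewrite tsum_cat tsum_opp.
  + by exists (tmul L1 L2); rewrite tsum_mul.
- by move=> d; exists [:: (d, [ffun=> 0%N])]; rewrite tsum1 mono0 mulr1.
- by move=> i; exists [:: (1, edelta i 1)]; rewrite tsum1 rmorph1 mul1r monomial_edelta.
Qed.

Lemma tsum_regroup (U : seq exps) L : uniq U -> {in L, forall p, p.2 \in U} ->
  tsum L = \sum_(E <- U) f (tcoef L E) * monomial a E.
Proof.
move=> Uuniq; elim: L => [|p L IH] LU.
  by rewrite /tsum big_nil big1 // => E _; rewrite /tcoef big_nil rmorph0 mul0r.
rewrite /tsum big_cons -/(tsum L) IH => [|q qL]; last by apply: LU; rewrite inE qL orbT.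
have pU : p.2 \in U by apply: LU; rewrite mem_head.
rewrite (bigD1_seq p.2) //= [in RHS](bigD1_seq p.2) //= /tcoef big_cons eqxx.
rewrite rmorphD mulrDl -addrA; congr (_ + (_ + _)); apply: eq_bigr => E pE.
by rewrite big_cons eq_sym (negbTE pE).
Qed.

Lemma tsum_eq0 L : {in L, forall p, tcoef L p.2 = 0} -> tsum L = 0.
Proof.
move=> L0; rewrite (@tsum_regroup (undup [seq p.2 | p <- L])) ?undup_uniq //; last first.
  by move=> p pL; rewrite mem_undup map_f.
rewrite big_seq big1 // => E; rewrite mem_undup => /mapP [p pL ->].
by rewrite L0 // rmorph0 mul0r.
Qed.

Lemma tcoef_notin L E : E \notin [seq p.2 | p <- L] -> tcoef L E = 0.
Proof.
move=> EL; rewrite /tcoef big1_seq // => p /andP [/eqP pE pL].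
by case/negP: EL; rewrite -pE map_f.
Qed.

Definition tdeg (L : seq (D * exps)) : nat := \max_(p <- L) \max_(i < m) p.2 i.

Lemma tdeg_ge (L : seq (D * exps)) (p : D * exps) i : p \in L -> (p.2 i <= tdeg L)%N.
Proof.
move=> pL; have := leq_bigmax_seq (F := fun q : D * exps => \max_(i < m) q.2 i) p pL isT.
exact/leq_trans/(leq_bigmax (F := fun i => p.2 i) i).
Qed.

Definition box N : seq exps := [seq [ffun i => nat_of_ord (e i)] | e : {ffun 'I_m -> 'I_N}].

Lemma box_uniq N : uniq (box N).
Proof.
rewrite map_inj_uniq ?enum_uniq // => e e' /ffunP ee'; apply/ffunP => i.
by apply: val_inj; have := ee' i; rewrite !ffunE.
Qed.

Lemma size_box N : size (box N) = (N ^ m)%N.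
Proof. by rewrite size_map -cardE card_ffun !card_ord. Qed.

Lemma mem_box N E : (E \in box N) = [forall i, E i < N]%N.
Proof.
apply/mapP/forallP => [[e _ ->] i | EN]; first by rewrite ffunE.
by exists [ffun i => Ordinal (EN i)]; rewrite ?mem_enum //; apply/ffunP => i; rewrite !ffunE.
Qed.

Section Independence.
Hypothesis indep : left_alg_indep f a.

Lemma tcoef_eq0 L : tsum L = 0 -> forall E, tcoef L E = 0.
Proof.
move=> L0 E; have [EL|/tcoef_notin //] := boolP (E \in [seq p.2 | p <- L]).
pose N := (tdeg L).+1.
have LN : {in L, forall p, p.2 \in box N}.
  by move=> p pL; rewrite mem_box; apply/forallP => i; rewrite ltnS tdeg_ge.
move: L0; rewrite (tsum_regroup (box_uniq N) LN) big_map big_enum /= => L0.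
have /indep coef0 : \sum_(e : {ffun 'I_m -> 'I_N})
    f (tcoef L [ffun i => nat_of_ord (e i)]) * monomial a (fun i => nat_of_ord (e i)) = 0.
  rewrite -[RHS]L0; apply: eq_bigr => e _; congr (_ * _).
  by apply: eq_bigr => i _; rewrite ffunE.
case/mapP: EL => p /LN /mapP [e _ ->] ->; exact: coef0.
Qed.

Lemma alg_indep_neq0 i : a i != 0.
Proof.
apply/eqP => ai0.
have /tcoef_eq0/(_ (edelta i 1)) : tsum [:: (1, edelta i 1)] = 0.
  by rewrite tsum1 rmorph1 mul1r monomial_edelta expr1.
by rewrite /tcoef big_cons big_nil eqxx addr0 => /eqP; rewrite oner_eq0.
Qed.

(* Every term of [a i ^+ N * v] has [i]-th exponent at least [N], beyond those of [w]. *)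
Lemma gen_subring_divisible_eq0 i w : R w ->
  (forall k, exists2 v, R v & w = a i ^+ k * v) -> w = 0.
Proof.
move=> /gen_subringP [L ->] divisible.
pose N := (tdeg L).+1; have [_ /gen_subringP [L' ->] EL'] := divisible N.
have aN : a i ^+ N = tsum [:: (1, edelta i N)].
  by rewrite tsum1 rmorph1 mul1r monomial_edelta.
pose P := tmul [:: (1, edelta i N)] L'.
have P_coef (F : exps) : (F i < N)%N -> tcoef P F = 0.
  move=> FN; rewrite /tcoef big1_seq // => q /andP [/eqP qF /allpairsP [[p1 p2] [/= + _ qE]]].
  rewrite inE => /eqP p1E; move: FN; rewrite -qF qE p1E /= !ffunE eqxx.
  by rewrite ltnNge leq_addr.
apply: tsum_eq0 => p pL.
have /tcoef_eq0/(_ p.2) : tsum (L ++ topp P) = 0.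
  by rewrite tsum_cat tsum_opp -tsum_mul -aN -EL' subrr.
rewrite /tcoef big_cat /= /topp big_map sumrN -/(tcoef L _) -/(tcoef P _).
by rewrite P_coef ?oppr0 ?addr0 // ltnS tdeg_ge.
Qed.

Definition trow N (c : exps -> D) : seq (D * exps) := [seq (c e, e) | e <- box N].

Lemma tcoef_trow N c e : e \in box N -> tcoef (trow N c) e = c e.
Proof.
move=> eN; rewrite /tcoef big_map /= -big_filter.
by rewrite (filter_pred1_uniq (box_uniq N) eN) big_seq1.
Qed.

Definition mul_coef (e : exps) (L : seq (D * exps)) (E : exps) : D :=
  \sum_(q <- L) (if [ffun i => e i + q.2 i] == E then twist e q.1 else 0).

Lemma tcoef_tmul_trow N c L E :
  tcoef (tmul (trow N c) L) E = \sum_(e <- box N) c e * mul_coef e L E.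
Proof.
rewrite /tcoef big_mkcond big_allpairs_dep big_map; apply: eq_bigr => e _.
by rewrite /mul_coef mulr_sumr; apply: eq_bigr => q _ /=; case: ifP; rewrite ?mulr0.
Qed.

Lemma tmul_trow_box (N d : nat) (c : exps -> D) (L : seq (D * exps)) :
  {in L, forall (q : D * exps) l, q.2 l <= d}%N ->
  {in tmul (trow N c) L, forall p, p.2 \in box (N + d)}.
Proof.
move=> Ld _ /allpairsP [[q1 q2] [/mapP [e e_in ->] q2_in ->]].
rewrite mem_box; apply/forallP => l; rewrite /= ffunE -addSn.
move: e_in; rewrite mem_box => /forallP/(_ l) e_lt.
exact: leq_add e_lt (Ld _ q2_in l).
Qed.

Hypothesis Ddiv : is_division_ring D.

Lemma gen_subring_strong_rank : strong_rank_condition R.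
Proof.
move=> k t Rt.
have [T HT] := fin_all_exists (fun j =>
  fin_all_exists (fun i => proj1 (gen_subringP _) (Rt j i))).
pose d := (\max_j \max_i tdeg (T j i)).+1.
have T_le_d j i : {in T j i, forall (q : D * exps) l, q.2 l <= d}%N.
  move=> q qT l; apply/leqW/(leq_trans (tdeg_ge l qT)).
  exact: leq_trans (leq_bigmax (F := fun i => tdeg (T j i)) i)
                   (leq_bigmax (F := fun j => \max_i tdeg (T j i)) j).
pose N := (d * (k.+1 * m).+1)%N.
pose vars := [seq (j, e) | j <- enum 'I_k.+1, e <- box N].
pose eqs := [seq (i, E) | i <- enum 'I_k, E <- box (N + d)].
pose phi (iE : 'I_k * exps) (je : 'I_k.+1 * exps) := mul_coef je.2 (T je.1 iE.1) iE.2.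
have [||y [[[j0 e0] je_in y_je] y_sol]] := homogeneous_system_nontrivial Ddiv phi
    (eqs := eqs) (vars := vars).
- by apply: allpairs_uniq => [||[? ?] [? ?] _ _] //; rewrite ?enum_uniq ?box_uniq.
- by rewrite !size_allpairs !size_enum_ord !size_box box_count_lt.
pose r j := tsum (trow N (fun e => y (j, e))).
exists r => [j|]; first by apply/gen_subringP; eexists.
split.
  exists j0; move: y_je; apply: contra_neq => /tcoef_eq0/(_ e0).
  by case/allpairsP: je_in => -[j' e'] [_ /= e'_in [-> ->]]; rewrite tcoef_trow.
move=> i; pose L := flatten [seq tmul (trow N (fun e => y (j, e))) (T j i) | j <- enum 'I_k.+1].
have -> : \sum_j r j * t j i = tsum L.
  rewrite /tsum big_flatten big_map big_enum /=.
  by apply: eq_bigr => j _; rewrite HT tsum_mul.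
apply: tsum_eq0 => p pL; rewrite -(y_sol (i, p.2)); last first.
  apply: allpairs_f; rewrite ?mem_enum //.
  by case/flattenP: pL => _ /mapP [j _ ->] p_in; exact: (tmul_trow_box (T_le_d j i) p_in).
rewrite /tcoef big_flatten big_map big_allpairs_dep /=.
by apply: eq_bigr => j' _; rewrite -/(tcoef _ _) tcoef_tmul_trow.
Qed.

End Independence.

End SkewMonomials.

Lemma prodr_rev_comm (R : pzSemiRingType) (I : Type) (r : seq I) (F : I -> R) :
  (forall i j, GRing.comm (F i) (F j)) -> \prod_(i <- rev r) F i = \prod_(i <- r) F i.
Proof.
move=> Fcomm; elim: r => [|i r IH]; first by rewrite !big_nil.
rewrite rev_cons big_rcons /= IH big_cons.
by apply: commr_sym; apply: commr_prod => j _; apply: Fcomm.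
Qed.

Section Converse.
Variables (D S : unitRingType) (f : {rmorphism D -> S}).

Definition rev_rmorph : D^c -> S^c := f.

HB.instance Definition _ := GRing.isZmodMorphism.Build (D^c) (S^c) rev_rmorph (rmorphB f).
HB.instance Definition _ := GRing.isMonoidMorphism.Build (D^c) (S^c) rev_rmorph
  (rmorph1 f, fun x y => rmorphM f y x).

Variables (m : nat) (a : 'I_m -> S) (tau : 'I_m -> D -> D).
Hypothesis acomm : forall i j, a i * a j = a j * a i.
Hypothesis aut : forall i, automorphic f (tau i) (a i).

Lemma gen_subring_rev x : gen_subring rev_rmorph a x <-> gen_subring f a x.
Proof.
have sub_rev (P : S -> Prop) : @subring_pred S^c P <-> subring_pred P.
  by split=> -[P1 PB PM]; split=> // x1 y1 Px Py; apply: PM.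
by split=> Rx P /sub_rev; apply: Rx.
Qed.

Lemma monomial_rev (E : 'I_m -> nat) : monomial a E = @monomial S^c m a E.
Proof.
rewrite /monomial rev_prodr [RHS](eq_bigr (fun i => (a i ^+ E i : S))) => [|i _]; last exact: revrX.
by rewrite prodr_rev_comm // => i j; exact: commr_expr acomm _ _ _ _.
Qed.

Lemma left_alg_indep_rev : injective f -> is_division_ring S ->
  left_alg_indep f a -> left_alg_indep rev_rmorph a.
Proof.
move=> finj Sdiv indep N c c_sum e.
pose E (e : {ffun 'I_m -> 'I_N}) i := nat_of_ord (e i).
have monoU e' : monomial a (E e') \is a GRing.unit.
  by apply: unitr_prod => i _; apply/unitrX/Sdiv/(alg_indep_neq0 indep).
have /indep/(_ e) twist0 : \sum_e' f (twist tau (E e') (c e')) * monomial a (E e') = 0.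
  rewrite -[RHS]c_sum; apply: eq_bigr => e' _.
  by rewrite -(monomial_automorphic aut) -monomial_rev.
apply: finj; rewrite rmorph0; apply: (mulrI (monoU e)).
by rewrite (monomial_automorphic aut) twist0 !rmorph0 mul0r mulr0.
Qed.

Lemma automorphic_rev (g : 'I_m -> D -> D) : (forall i, cancel (g i) (tau i)) ->
  forall i, automorphic rev_rmorph (g i) (a i).
Proof. by move=> gK i b; have := aut i (g i b); rewrite gK => /esym. Qed.

End Converse.

Lemma gen_subring_right_ore (D S : unitRingType) (f : {rmorphism D -> S}) (m : nat)
    (a : 'I_m -> S) (tau : 'I_m -> D -> D) :
  injective f -> is_division_ring D -> is_division_ring S ->
  (forall i j, a i * a j = a j * a i) -> (forall i, automorphic f (tau i) (a i)) ->
  (forall i, bijective (tau i)) -> left_alg_indep f a -> right_ore (gen_subring f a).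
Proof.
move=> finj Ddiv Sdiv acomm aut taub indep u v Ru Rv u0 v0.
have [g gK] : exists g : 'I_m -> D -> D, forall i, cancel (g i) (tau i).
  have tau_inv i : exists h : D -> D, cancel h (tau i).
    by case: (taub i) => h _ hK; exists h.
  exact: fin_all_exists tau_inv.
have rank_rev : strong_rank_condition (gen_subring (rev_rmorph f) a).
  apply: (@gen_subring_strong_rank D^c S^c (rev_rmorph f) m a g) => //.
  - by move=> i j; exact: acomm j i.
  - exact: (automorphic_rev aut gK).
  - exact: (left_alg_indep_rev acomm aut finj Sdiv indep).
have [||p [q [Rp Rq p0 E]]] := @strong_rank_left_ore S^c _ Sdiv (gen_subring_pred _ _) rank_rev
  u v _ _ u0 v0; try exact/gen_subring_rev.
by exists p, q; split; rewrite // -gen_subring_rev.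
Qed.

Lemma gen_subring0 (D S : unitRingType) (f : {rmorphism D -> S}) (a : 'I_0 -> S) x :
  gen_subring f a x -> exists d, x = f d.
Proof.
move/(_ (fun x => exists d, x = f d)); apply=> [|d|[] //]; last by exists d.
split=> [|_ _ [d ->] [d' ->]|_ _ [d ->] [d' ->]].
- by exists 1; rewrite rmorph1.
- by exists (d - d'); rewrite rmorphB.
- by exists (d * d'); rewrite rmorphM.
Qed.

Theorem proposition2p19 (D S : unitRingType) (f : {rmorphism D -> S}) :
  injective f ->
  is_division_ring D ->
  automorphically_normalizable f ->
  is_division_ring S ->
  fg_left_D_module f.
Proof.
move=> finj Ddiv [m [a [tau [acomm [taut [_ [aut [indep [n [s Rgen]]]]]]]]]] Sdiv.
case: m a tau acomm taut aut indep Rgen => [|m] a tau acomm taut aut indep Rgen.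
  exists n, s => x; have [t [Rt ->]] := Rgen x.
  have [c tc] := fin_all_exists (fun i => gen_subring0 (Rt i)).
  by exists c; apply: eq_bigr => i _; rewrite tc.
have taub i : bijective (tau i) by case: (taut i).
have Rsub := gen_subring_pred f a.
have [W [RW W0] HW] := exists_common_denominator Sdiv Rsub
  (gen_subring_strong_rank acomm aut indep Ddiv)
  (gen_subring_right_ore finj Ddiv Sdiv acomm aut taub indep) Rgen.
have a0U k : a ord0 ^+ k \is a GRing.unit by apply/unitrX/Sdiv/(alg_indep_neq0 indep).
case/eqP: W0; apply: (gen_subring_divisible_eq0 acomm aut indep (i := ord0) RW) => k.
exists ((a ord0 ^+ k)^-1 * W); last by rewrite mulVKr.
apply: HW; last by apply: contraTneq (a0U k) => ->; rewrite unitr0.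
by apply: (subring_predX Rsub); apply: gen_subring_gen.
Qed.
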